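(* $\mathrm{A}_2(4,3)=5$, and there are exactly $3$ isomorphism classes of sets of $5$ subspaces of $\mathbb{F}_2^4$ with pairwise subspace distance $\geq3$. Taking a line spread $\{L_1,\dots,L_5\}$ of $\mathrm{PG}(3,\mathbb{F}_2)$ (five pairwise trivially-intersecting $2$-dimensional subspaces of $\mathbb{F}_2^4$), representatives are: (a) $\{L_1,L_2,L_3,L_4,L_5\}$; (b) $\{L_1,L_2,L_3,L_4,P\}$ with $P$ a $1$-dimensional subspace of $L_5$; (c) $\{L_1,L_2,L_3,P,E\}$ with $P$ a $1$-dimensional subspace of $L_4$ and $E$ a $3$-dimensional subspace containing $L_5$ with $P\not\subseteq E$.
   Context: Subspace distance $\mathrm{d}_{\mathrm{S}}(X,Y)=\dim(X+Y)-\dim(X\cap Y)$. Two such codes are isomorphic if some bijection of the set of subspaces of $\mathbb{F}_2^4$ preserving $\mathrm{d}_{\mathrm{S}}$ (equivalently, an element of $\mathrm{GL}(4,\mathbb{F}_2)$, possibly composed with $X\mapsto X^\perp$) maps one onto the other. *)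

From HB Require Import structures.
From mathcomp Require Import all_boot all_order all_algebra all_fingroup all_field.
Set Implicit Arguments. Unset Strict Implicit. Unset Printing Implicit Defensive.
Import GRing.Theory.

Definition V4 := 'rV['F_2]_4.
Definition subsp := {vspace V4}.

Definition dS (X Y : subsp) : nat := (\dim (X + Y) - \dim (X :&: Y))%N.

Definition is_code (d : nat) (C : seq subsp) : Prop :=
  uniq C /\ forall X Y, X \in C -> Y \in C -> X != Y -> (d <= dS X Y)%N.

Definition code_iso (C C' : seq subsp) : Prop :=
  exists f : subsp -> subsp,
    [/\ bijective f, (forall X Y, dS (f X) (f Y) = dS X Y) & map f C =i C'].

Definition line_spread (L : 'I_5 -> subsp) : Prop :=
  (forall i, \dim (L i) = 2%N) /\ (forall i j, i != j -> (L i :&: L j = 0)%VS).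

Definition i0 : 'I_5 := @Ordinal 5 0 isT.
Definition i1 : 'I_5 := @Ordinal 5 1 isT.
Definition i2 : 'I_5 := @Ordinal 5 2 isT.
Definition i3 : 'I_5 := @Ordinal 5 3 isT.
Definition i4 : 'I_5 := @Ordinal 5 4 isT.

(* hypotheses on the auxiliary subspaces:
   P5 a point of L5, P4 a point of L4, E a plane containing L5 with P4 not in E *)
Definition spread_data (L : 'I_5 -> subsp) (P5 P4 E : subsp) : Prop :=
  [/\ line_spread L,
      \dim P5 = 1%N /\ (P5 <= L i4)%VS,
      \dim P4 = 1%N /\ (P4 <= L i3)%VS &
      [/\ \dim E = 3%N, (L i4 <= E)%VS & ~~ (P4 <= E)%VS]].

Definition code_a (L : 'I_5 -> subsp) : seq subsp := [:: L i0; L i1; L i2; L i3; L i4].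
Definition code_b (L : 'I_5 -> subsp) (P5 : subsp) : seq subsp :=
  [:: L i0; L i1; L i2; L i3; P5].
Definition code_c (L : 'I_5 -> subsp) (P4 E : subsp) : seq subsp :=
  [:: L i0; L i1; L i2; P4; E].

From HB Require Import structures.
From mathcomp Require Import all_boot all_order all_algebra all_fingroup all_field.
From mathcomp Require Import zify.
Set Implicit Arguments. Unset Strict Implicit. Unset Printing Implicit Defensive.
Import GRing.Theory.

(* A subspace of F_2^4 is encoded by the bitmask of the 16 vectors it contains; the
   67 masks that contain 0 and are closed under xor are exactly these encodings.  A
   code of minimum distance 3 becomes a clique in the graph on the 67 masks joining
   masks at distance at least 3.  Enumeration shows that there is no clique of size 6,
   and that the cliques of size 5 form three orbits under the group generated by the
   elementary transvections and orthogonal complementation, with the spread codes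
   (a), (b), (c) as representatives.  These are told apart by the number of ordered
   pairs of members at distance 4 (20, 12 and 8), which every isomorphism preserves. *)

(** * Subspace distance and isomorphism of codes *)

Lemma dS_sym X Y : dS X Y = dS Y X.
Proof. by rewrite /dS addvC capvC. Qed.

Lemma dS_refl X : dS X X = 0.
Proof. by rewrite /dS addvv capvv subnn. Qed.

Lemma dSE X Y : dS X Y = \dim X + \dim Y - (\dim (X :&: Y)).*2.
Proof. by rewrite /dS -(dimv_sum_cap X Y) -addnn subnDA addnK. Qed.

Lemma dS_cap0 X Y : (X :&: Y = 0)%VS -> dS X Y = \dim X + \dim Y.
Proof. by move=> XY0; rewrite dSE XY0 dimv0 subn0. Qed.

Lemma is_code_pairwise d C :
  0 < d -> pairwise (fun X Y => d <= dS X Y) C -> is_code d C.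
Proof.
move=> d_gt0 farC; split.
  by apply: pairwise_uniq farC => X; rewrite dS_refl leqNgt d_gt0.
pose r X Y := (X == Y) || (d <= dS X Y).
have /allrelP rC : all2rel r C.
  rewrite -pairwise_all2rel => [|X|X Y]; last by rewrite /r eq_sym dS_sym.
  - by apply: sub_pairwise farC => X Y; rewrite /r => ->; rewrite orbT.
  - by rewrite /r eqxx.
by move=> X Y XC YC /negbTE XY; have := rC X Y XC YC; rewrite /r XY.
Qed.

Lemma is_code_subseq d C C' : subseq C' C -> is_code d C -> is_code d C'.
Proof.
move=> subC [uC farC]; split; first exact: subseq_uniq uC.
by move=> X Y /(mem_subseq subC) XC /(mem_subseq subC); apply: farC.
Qed.

Lemma code_iso_refl C : code_iso C C.
Proof. by exists id; split => //; [exists id | move=> X; rewrite map_id]. Qed.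

Lemma code_iso_sym C D : code_iso C D -> code_iso D C.
Proof.
case=> f [[g fK gK] dSf fCD]; exists g; split=> [|X Y|X]; first by exists f.
  by rewrite -dSf !gK.
apply/mapP/idP => [[Y]|DX]; first by rewrite -fCD => /mapP [Z CZ ->] ->; rewrite fK.
by exists (f X); rewrite ?fK // -fCD map_f.
Qed.

Lemma code_iso_trans C D E : code_iso C D -> code_iso D E -> code_iso C E.
Proof.
case=> f [bij_f dSf fCD] [g [bij_g dSg gDE]]; exists (g \o f); split.
- exact: bij_comp.
- by move=> X Y /=; rewrite dSg dSf.
- by move=> X; rewrite map_comp -gDE; apply: eq_mem_map.
Qed.

Lemma code_iso_eq_mem C C' D : C =i C' -> code_iso C' D -> code_iso C D.
Proof. by move=> CC' [f [bij_f dSf fCD]]; exists f; split=> // X; rewrite -fCD; apply: eq_mem_map. Qed.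

Lemma code_iso_map f C :
  involutive f -> (forall X Y, dS (f X) (f Y) = dS X Y) -> code_iso (map f C) C.
Proof.
move=> fK dSf; exists f; split=> //; first exact: inv_bij.
by move=> X; rewrite -map_comp (eq_map fK) map_id.
Qed.

Definition dist4_pairs (C : seq subsp) : nat :=
  \sum_(X <- C) \sum_(Y <- C) (dS X Y == 4).

Lemma dist4_pairs_iso C D :
  code_iso C D -> uniq C -> uniq D -> dist4_pairs C = dist4_pairs D.
Proof.
case=> f [[g fK _] dSf fCD] uC uD.
have fCD_perm : perm_eq D (map f C).
  by apply: uniq_perm => //; rewrite ?(map_inj_uniq (can_inj fK)) // => X; rewrite fCD.
have sumD F : \sum_(Y <- D) F Y = \sum_(X <- C) F (f X).
  by rewrite (perm_big _ fCD_perm) big_map.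
by rewrite /dist4_pairs sumD; apply: eq_bigr => X _; rewrite sumD; apply: eq_bigr => Y _; rewrite dSf.
Qed.

(** * The codes built from a line spread *)

Section Incidence.
Variables (K : fieldType) (vT : vectType K).
Implicit Types P E L M X Y : {vspace vT}.

Lemma capv0S P X Y : (P <= X)%VS -> (X :&: Y = 0)%VS -> (P :&: Y = 0)%VS.
Proof. by move=> PX XY0; apply/eqP; rewrite -subv0 -XY0 capvS. Qed.

Lemma capv_point_notin P E : \dim P = 1 -> ~~ (P <= E)%VS -> (P :&: E = 0)%VS.
Proof.
move=> dimP PnE; apply/eqP; rewrite -dimv_eq0 -leqn0 leqNgt.
apply: contra PnE => PE_gt0.
have <- : (P :&: E)%VS = P by apply/eqP; rewrite eqEdim capvSl dimP.
exact: capvSr.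
Qed.

Lemma dim_cap_plane_line E L M :
  \dim {:vT} = 4 -> \dim E = 3 -> \dim L = 2 -> \dim M = 2 ->
  (M <= E)%VS -> (L :&: M = 0)%VS -> \dim (E :&: L) = 1.
Proof.
move=> dimV dimE dimL dimM ME LM0.
have EL_le4 : \dim (E + L) <= 4 by rewrite -dimV dimvS ?subvf.
have EL_le2 : \dim (E :&: L) <= 2 by rewrite -dimL dimvS ?capvSr.
have EL_ne2 : \dim (E :&: L) != 2.
  apply/eqP => dimEL.
  have ELL : (E :&: L)%VS = L by apply/eqP; rewrite eqEdim capvSr dimEL dimL.
  have LE : (L <= E)%VS by rewrite -ELL capvSl.
  have LME : (L + M <= E)%VS by rewrite subv_add LE ME.
  have := dimv_sum_cap L M; rewrite LM0 dimv0 addn0 dimL dimM => dimLM.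
  by have := dimvS LME; rewrite dimLM dimE.
by move: (dimv_sum_cap E L) EL_le4 EL_le2 EL_ne2; rewrite dimE dimL; lia.
Qed.

End Incidence.

Lemma dim_fullV4 : \dim {:V4} = 4.
Proof. by rewrite dimvf dim_matrix. Qed.

Section SpreadCodes.
Variables (L : 'I_5 -> subsp) (P5 P4 E : subsp).
Hypothesis data : spread_data L P5 P4 E.

Let dimL i : \dim (L i) = 2. Proof. by case: data => -[dimL _] _ _ _. Qed.
Let capL i j : i != j -> (L i :&: L j = 0)%VS. Proof. by case: data => -[_ cap0] _ _ _; apply: cap0. Qed.

Lemma dS_lines i j : i != j -> dS (L i) (L j) = 4.
Proof. by move=> ij; rewrite dS_cap0 ?dimL ?capL. Qed.

Lemma dS_line_point5 i : i != i4 -> dS (L i) P5 = 3.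
Proof.
case: data => _ [dimP5 P5L4] _ _ i4i; rewrite dS_sym dS_cap0 ?dimP5 ?dimL //.
by apply: capv0S P5L4 _; apply: capL; rewrite eq_sym.
Qed.

Lemma dS_line_point4 i : i != i3 -> dS (L i) P4 = 3.
Proof.
case: data => _ _ [dimP4 P4L3] _ i3i; rewrite dS_sym dS_cap0 ?dimP4 ?dimL //.
by apply: capv0S P4L3 _; apply: capL; rewrite eq_sym.
Qed.

Lemma dS_line_plane i : i != i4 -> dS (L i) E = 3.
Proof.
case: data => _ _ _ [dimE L4E _] i4i; rewrite dS_sym dSE dimE dimL.
by rewrite (dim_cap_plane_line dim_fullV4 dimE (dimL i) (dimL i4) L4E) ?capL.
Qed.

Lemma dS_point4_plane : dS P4 E = 4.
Proof. by case: data => _ _ [dimP4 _] [dimE _ P4nE]; rewrite dS_cap0 ?capv_point_notin ?dimP4 ?dimE. Qed.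

Lemma spread_codes :
  [/\ is_code 3 (code_a L), is_code 3 (code_b L P5) & is_code 3 (code_c L P4 E)].
Proof.
by split; apply: is_code_pairwise => //=;
  rewrite ?dS_lines ?dS_line_point5 ?dS_line_point4 ?dS_line_plane ?dS_point4_plane.
Qed.

Lemma spread_dist4_pairs :
  [/\ dist4_pairs (code_a L) = 20, dist4_pairs (code_b L P5) = 12
    & dist4_pairs (code_c L P4 E) = 8].
Proof.
rewrite /dist4_pairs /code_a /code_b /code_c !big_cons !big_nil !dS_refl.
rewrite ![dS P5 (L _)]dS_sym ![dS P4 (L _)]dS_sym ![dS E (L _)]dS_sym [dS E P4]dS_sym.
by rewrite !dS_lines ?dS_line_point5 ?dS_line_point4 ?dS_line_plane ?dS_point4_plane.
Qed.

End SpreadCodes.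

(** * Subspaces of F_2^4 as bitmasks *)

Lemma all_iotaP (p : pred nat) k : reflect {in gtn k, forall n, p n} (all p (iota 0 k)).
Proof.
apply: (iffP allP) => [pk n /= ltnk | pk n]; first by apply: pk; rewrite mem_iota.
by rewrite mem_iota => /andP[_ ltnk]; apply: pk.
Qed.

Definition nbit (n j : nat) : bool := odd (n %/ 2 ^ j).

Lemma nbit_lxor n m j :
  n < 16 -> m < 16 -> j < 4 -> nbit (Nat.lxor n m) j = nbit n j (+) nbit m j.
Proof.
have /all_iotaP bits : all (fun n => all (fun m => all (fun j =>
  nbit (Nat.lxor n m) j == nbit n j (+) nbit m j) (iota 0 4)) (iota 0 16)) (iota 0 16).
  by vm_compute.
by move=> /bits /all_iotaP bits_n /bits_n /all_iotaP bits_nm /bits_nm /eqP.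
Qed.

Lemma lxor_lt16 n m : n < 16 -> m < 16 -> Nat.lxor n m < 16.
Proof.
have /all_iotaP lt16 : all (fun n => all (fun m => Nat.lxor n m < 16) (iota 0 16)) (iota 0 16).
  by vm_compute.
by move=> /lt16 /all_iotaP lt16_n /lt16_n.
Qed.

Lemma nbit_inj n m : n < 16 -> m < 16 -> (forall j, j < 4 -> nbit n j = nbit m j) -> n = m.
Proof.
have /all_iotaP bits : all (fun n => all (fun m =>
  all (fun j => nbit n j == nbit m j) (iota 0 4) ==> (n == m)) (iota 0 16)) (iota 0 16).
  by vm_compute.
move=> /bits /all_iotaP bits_n /bits_n /implyP nm_eq nm_bits; apply/eqP/nm_eq.
by apply/all_iotaP => j /= /nm_bits ->.
Qed.

Definition vecn (n : nat) : V4 := (\row_(j < 4) (nbit n j)%:R)%R.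

Lemma natr_F2_inj : injective (fun b : bool => (b%:R : 'F_2)%R).
Proof. by do 2!case=> //; move/eqP. Qed.

Lemma vecn0 : vecn 0 = 0%R.
Proof. by apply/rowP => j; rewrite !mxE /nbit div0n. Qed.

Lemma vecn_lxor n m : n < 16 -> m < 16 -> vecn (Nat.lxor n m) = (vecn n + vecn m)%R.
Proof.
move=> n16 m16; apply/rowP => j; rewrite !mxE nbit_lxor //.
by case: (nbit n j); case: (nbit m j); rewrite ?addr0 ?add0r //; apply/eqP.
Qed.

Lemma vecn_inj : {in gtn 16 &, injective vecn}.
Proof.
move=> n m n16 m16 nm; apply: nbit_inj n16 m16 _ => j j4.
by apply: natr_F2_inj; have := congr1 (fun v : V4 => v ord0 (Ordinal j4)) nm; rewrite !mxE.
Qed.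

Lemma vecn_onto (v : V4) : exists2 n, n < 16 & vecn n = v.
Proof.
have inj_vecn : injective (fun i : 'I_16 => vecn i).
  by move=> i j /(vecn_inj (ltn_ord i) (ltn_ord j)) /val_inj.
have [|g _ vecnK] := inj_card_bij inj_vecn.
  by rewrite card_ord /V4 card_mx card_Fp.
by exists (g v); rewrite ?vecnK.
Qed.

(* [all] with short-circuit evaluation under [vm_compute]; this makes the scan
   of all 2^16 masks below affordable. *)
Fixpoint lazy_all {T : Type} (p : pred T) (s : seq T) : bool :=
  if s is x :: s' then (if p x then lazy_all p s' else false) else true.

Lemma lazy_allE {T : Type} (p : pred T) : lazy_all p =1 all p.
Proof. by elim=> //= x s ->; case: (p x). Qed.

(* [mask_of], [subsp_of] and [index_of] are locked: unfolding them would send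
   conversion problems between two instances into rank computations on abstract
   subspaces. *)
Fact mask_of_key : unit. Proof. exact: tt. Qed.
Definition mask_of : subsp -> seq bool :=
  locked_with mask_of_key (fun X => mkseq (fun n => vecn n \in X) 16).

Lemma mask_ofE X : mask_of X = mkseq (fun n => vecn n \in X) 16.
Proof. by rewrite /mask_of locked_withE. Qed.

Lemma size_mask_of X : size (mask_of X) = 16.
Proof. by rewrite mask_ofE size_mkseq. Qed.

Fact subsp_of_key : unit. Proof. exact: tt. Qed.
Definition subsp_of : seq bool -> subsp :=
  locked_with subsp_of_key (fun s => <<[seq vecn n | n <- iota 0 16 & nth false s n]>>%VS).

Definition closed_mask (s : seq bool) : bool :=
  let mem n := nth false s n in
  if (size s == 16) && mem 0 then
    lazy_all (fun n => if mem n then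
      lazy_all (fun m => if mem m then mem (Nat.lxor n m) else true) (iota 0 16)
    else true) (iota 0 16)
  else false.

Lemma closed_maskP s :
  reflect [/\ size s = 16, nth false s 0 &
             {in gtn 16 &, forall n m, nth false s n -> nth false s m ->
                                       nth false s (Nat.lxor n m)}]
          (closed_mask s).
Proof.
rewrite /closed_mask; case: eqP => [size_s|]; last by constructor; case.
have [s0|ns0] := boolP (nth false s 0); last by rewrite andbF; constructor; case=> _ /negP.
rewrite andbT lazy_allE; apply: (iffP (all_iotaP _ _)) => [sxor | [_ _ sxor] n n16].
  split=> // n m n16 m16 sn sm.
  by move/(_ n n16): sxor; rewrite sn lazy_allE => /all_iotaP /(_ m m16); rewrite sm.
case: ifP => // sn; rewrite lazy_allE; apply/all_iotaP => m m16.
by case: ifP => // sm; apply: sxor.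
Qed.

Lemma nth_mask_of X n : n < 16 -> nth false (mask_of X) n = (vecn n \in X).
Proof. by move=> n16; rewrite mask_ofE nth_mkseq. Qed.

Lemma mask_of_closed X : closed_mask (mask_of X).
Proof.
apply/closed_maskP; split; first exact: size_mask_of.
  by rewrite nth_mask_of // vecn0 mem0v.
move=> n m n16 m16; rewrite !nth_mask_of ?lxor_lt16 // vecn_lxor //.
exact: memvD.
Qed.

Lemma F2_0or1 (c : 'F_2) : c = 0%R \/ c = 1%R.
Proof. by case: c => -[|[|//]] ?; [left | right]; apply/val_inj. Qed.

(* Over F_2 a linear combination is a sum of a subfamily, so a xor-closed
   mask containing 0 already contains its span. *)
Lemma mem_subsp_of s n :
  closed_mask s -> n < 16 -> (vecn n \in subsp_of s) = nth false s n.
Proof.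
move=> /closed_maskP [_ s0 sxor] n16; rewrite /subsp_of locked_withE.
set S := [seq _ | _ <- _ & _]; apply/idP/idP => [|sn]; last first.
  by apply: memv_span; apply: map_f; rewrite mem_filter sn mem_iota.
move=> /(@coord_span _ _ _ (in_tuple S)) vecn_n.
pose inS (v : V4) := has (fun k => [&& k < 16, nth false s k & vecn k == v]) (iota 0 16).
suff /hasP [k _ /and3P [k16 sk /eqP /(vecn_inj k16 n16) <-]] : inS (vecn n) by [].
have inS0 : inS 0%R by apply/hasP; exists 0 => //; rewrite s0 vecn0 eqxx.
rewrite vecn_n; apply: (big_ind inS) => // [_ _ /hasP [k _ /and3P [k16 sk /eqP <-]]
                            /hasP [l _ /and3P [l16 sl /eqP <-]] | i _].
  apply/hasP; exists (Nat.lxor k l); first by rewrite mem_iota lxor_lt16.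
  by rewrite lxor_lt16 // sxor // vecn_lxor // eqxx.
case: (@F2_0or1 (coord (in_tuple S) i (vecn n))) => ->; first by rewrite scale0r.
have /mapP [k] : ((in_tuple S)`_i \in S)%R by apply: mem_nth.
rewrite mem_filter mem_iota => /and3P [sk _ k16] ->.
by rewrite scale1r; apply/hasP; exists k; rewrite ?mem_iota // k16 sk eqxx.
Qed.

Lemma subsp_of_mask X : subsp_of (mask_of X) = X.
Proof.
apply/vspaceP => v; have [n n16 <-] := vecn_onto v.
by rewrite mem_subsp_of ?mask_of_closed ?nth_mask_of.
Qed.

Lemma mask_of_subsp s : closed_mask s -> mask_of (subsp_of s) = s.
Proof.
move=> s_closed; have /closed_maskP [size_s _ _] := s_closed.
apply: (@eq_from_nth _ false) => [|n]; first by rewrite size_mask_of size_s.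
by rewrite size_mask_of => n16; rewrite nth_mask_of // mem_subsp_of.
Qed.

Definition dim_mask (s : seq bool) : nat := trunc_log 2 (count id s).

Definition cap_mask (s t : seq bool) : seq bool := [seq b.1 && b.2 | b <- zip s t].

Definition dS_mask (s t : seq bool) : nat :=
  dim_mask s + dim_mask t - (dim_mask (cap_mask s t)).*2.

Lemma count_mask_of X : count id (mask_of X) = 2 ^ \dim X.
Proof.
pose g (i : 'I_16) := vecn i.
have inj_g : injective g by move=> i j /(vecn_inj (ltn_ord i) (ltn_ord j)) /val_inj.
have -> : count id (mask_of X) = #|[preim g of mem X]|.
  by rewrite mask_ofE count_map -sum1_count -[iota 0 16]/(index_iota 0 16) big_mkord sum1_card.
have -> : 2 ^ \dim X = #|X| by rewrite card_vspace card_Fp.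
rewrite card_preim //; apply: eq_card => v.
by rewrite inE; have [n n16 <-] := vecn_onto v; rewrite (codom_f g (Ordinal n16)).
Qed.

Lemma dim_mask_of X : dim_mask (mask_of X) = \dim X.
Proof. by rewrite /dim_mask count_mask_of trunc_expnK. Qed.

Lemma mask_of_cap X Y : mask_of (X :&: Y)%VS = cap_mask (mask_of X) (mask_of Y).
Proof.
rewrite /cap_mask; apply: (@eq_from_nth _ false) => [|n].
  by rewrite size_map size_zip !size_mask_of.
rewrite size_mask_of => n16; rewrite (nth_map (false, false)) ?size_zip ?size_mask_of //.
by rewrite nth_zip ?size_mask_of //= !nth_mask_of // memv_cap.
Qed.

Lemma dS_mask_of X Y : dS_mask (mask_of X) (mask_of Y) = dS X Y.
Proof. by rewrite /dS_mask -mask_of_cap !dim_mask_of dSE. Qed.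

Fixpoint bool_seqs (k : nat) : seq (seq bool) :=
  if k is k'.+1 then [seq b :: s | b <- [:: false; true], s <- bool_seqs k'] else [:: [::]].

Lemma mem_bool_seqs s : s \in bool_seqs (size s).
Proof. by elim: s => // b s IHs; apply/allpairsP; exists (b, s); case: b. Qed.

Definition subspace_masks : seq (seq bool) :=
  Eval vm_compute in [seq s <- bool_seqs 16 | closed_mask s].

Lemma subspace_masksE : subspace_masks = [seq s <- bool_seqs 16 | closed_mask s].
Proof. by vm_compute. Qed.

Lemma mem_subspace_masks s : (s \in subspace_masks) = closed_mask s.
Proof.
rewrite subspace_masksE mem_filter andb_idr // => /closed_maskP [<- _ _].
exact: mem_bool_seqs.
Qed.

Lemma size_subspace_masks : size subspace_masks = 67.
Proof. by []. Qed.

Definition mask_at (k : nat) : seq bool := nth [::] subspace_masks k.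
Definition subsp_at (k : nat) : subsp := subsp_of (mask_at k).
Fact index_of_key : unit. Proof. exact: tt. Qed.
Definition index_of : subsp -> nat :=
  locked_with index_of_key (fun X => index (mask_of X) subspace_masks).

Lemma index_ofE X : index_of X = index (mask_of X) subspace_masks.
Proof. by rewrite /index_of locked_withE. Qed.

Lemma closed_mask_at k : k < 67 -> closed_mask (mask_at k).
Proof. by move=> k67; rewrite -mem_subspace_masks mem_nth. Qed.

Lemma mask_of_subsp_at k : k < 67 -> mask_of (subsp_at k) = mask_at k.
Proof. by move/closed_mask_at/mask_of_subsp. Qed.

Lemma index_of_lt X : index_of X < 67.
Proof. by rewrite index_ofE -size_subspace_masks index_mem mem_subspace_masks mask_of_closed. Qed.

Lemma mask_at_index X : mask_at (index_of X) = mask_of X.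
Proof. by rewrite /mask_at index_ofE nth_index // mem_subspace_masks mask_of_closed. Qed.

Lemma subsp_at_index X : subsp_at (index_of X) = X.
Proof. by rewrite /subsp_at mask_at_index subsp_of_mask. Qed.

Lemma index_of_inj : injective index_of.
Proof. by move=> X Y XY; rewrite -[X]subsp_at_index XY subsp_at_index. Qed.

Lemma dS_subsp_at k l : k < 67 -> l < 67 ->
  dS (subsp_at k) (subsp_at l) = dS_mask (mask_at k) (mask_at l).
Proof. by move=> k67 l67; rewrite -dS_mask_of !mask_of_subsp_at. Qed.

Lemma dim_subsp_at k : k < 67 -> \dim (subsp_at k) = dim_mask (mask_at k).
Proof. by move=> k67; rewrite -dim_mask_of mask_of_subsp_at. Qed.

Lemma dim_cap_subsp_at k l : k < 67 -> l < 67 ->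
  \dim (subsp_at k :&: subsp_at l) = dim_mask (cap_mask (mask_at k) (mask_at l)).
Proof. by move=> k67 l67; rewrite -dim_mask_of mask_of_cap !mask_of_subsp_at. Qed.

(** * Codes as cliques *)

Definition adjacent (g : seq (seq bool)) (a b : nat) : bool := nth false (nth [::] g a) b.

Definition next_vertex (K : seq nat) : nat := if K is _ :: _ then (last 0 K).+1 else 0.

Definition extend_clique g K : seq (seq nat) :=
  [seq rcons K x | x <- iota (next_vertex K) (size g - next_vertex K) & all (adjacent g ^~ x) K].

Definition cliques g (n : nat) : seq (seq nat) :=
  iter n (fun Ks => flatten (map (extend_clique g) Ks)) [:: [::]].

Lemma mem_cliques g K : all (gtn (size g)) K ->
  pairwise (fun a b => (a < b) && adjacent g a b) K -> K \in cliques g (size K).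
Proof.
elim/last_ind: K => // K x IHK; rewrite all_rcons pairwise_rcons size_rcons.
case/andP=> xg Kg /andP [Kx K_clique]; apply/flatten_mapP; exists K; first exact: IHK.
apply: map_f; rewrite mem_filter; apply/andP; split.
  by apply/allP => k /(allP Kx) /andP [].
have next_x : next_vertex K <= x.
  by case: K Kx {IHK Kg K_clique} => // y K /allP /(_ _ (mem_last y K)) /andP [].
by rewrite mem_iota next_x subnKC // ltnW // (leq_ltn_trans next_x).
Qed.

Definition far_table : seq (seq bool) :=
  [seq [seq 3 <= dS_mask s t | t <- subspace_masks] | s <- subspace_masks].

Lemma adjacent_far a b : a < 67 -> b < 67 ->
  adjacent far_table a b = (3 <= dS (subsp_at a) (subsp_at b)).
Proof.
by move=> a67 b67; rewrite dS_subsp_at // /adjacent !(nth_map [::]) ?size_subspace_masks.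
Qed.

Lemma no_6_cliques : cliques far_table 6 = [::].
Proof. by vm_compute. Qed.

Definition index_code (C : seq subsp) : seq nat := sort leq (map index_of C).

Lemma index_codeK C : map subsp_at (index_code C) =i C.
Proof.
move=> X; rewrite (perm_mem (perm_map _ (permEl (perm_sort _ _)))) -map_comp.
by rewrite (eq_map subsp_at_index) map_id.
Qed.

Lemma index_code_clique C : is_code 3 C -> index_code C \in cliques far_table (size C).
Proof.
case=> uC farC; have <- : size (index_code C) = size C by rewrite size_sort size_map.
have K67 : all (gtn 67) (index_code C).
  by rewrite all_sort; apply/allP => _ /mapP [X _ ->]; apply: index_of_lt.
apply: (@mem_cliques far_table (index_code C)); first by rewrite size_map.
have : sorted ltn (index_code C).
  rewrite ltn_sorted_uniq_leq sort_uniq (map_inj_uniq index_of_inj) uC.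
  exact: (sort_sorted leq_total).
rewrite (sorted_pairwise ltn_trans); apply: sub_in_pairwise (allss _) => a b.
rewrite !mem_sort => /mapP [X XC ->] /mapP [Y YC ->] XY.
have XneY : X != Y by apply: contraTneq XY => ->; rewrite ltnn.
apply/andP; split; first exact: XY.
rewrite (adjacent_far (index_of_lt X) (index_of_lt Y)) !subsp_at_index.
exact: farC XC YC XneY.
Qed.

Lemma code3_size_le5 C : is_code 3 C -> size C <= 5.
Proof.
move=> codeC; rewrite leqNgt; apply/negP => C_gt5.
have /index_code_clique : is_code 3 (take 6 C) := is_code_subseq (take_subseq C 6) codeC.
by rewrite size_takel ?no_6_cliques.
Qed.

(** * Symmetries and their orbits *)

Definition transvection_mask (j k : nat) (s : seq bool) : seq bool :=
  mkseq (fun n => nth false s (if nbit n j then Nat.lxor n (2 ^ k) else n)) 16.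

Definition dotn (n m : nat) : bool := odd (count (fun j => nbit n j && nbit m j) (iota 0 4)).

Definition perp_mask (s : seq bool) : seq bool :=
  mkseq (fun n => all (fun m => nth false s m ==> ~~ dotn n m) (iota 0 16)) 16.

(* The elementary transvections v |-> v + v_j e_k generate GL(4, F_2); together with
   X |-> X^perp they act on subspaces by distance-preserving involutions. *)
Definition generators : seq (seq bool -> seq bool) :=
  perp_mask :: [seq transvection_mask jk.1 jk.2
               | jk <- [seq (j, k) | j <- iota 0 4, k <- rem j (iota 0 4)]].

Definition symmetry_mask (g : seq bool -> seq bool) : bool :=
  let graph := [seq (s, g s) | s <- subspace_masks] in
  all (fun p => (p.2 \in subspace_masks) && (g p.2 == p.1)) graph &&
  all (fun p => all (fun q => dS_mask p.2 q.2 == dS_mask p.1 q.1) graph) graph.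

Lemma generators_symmetries : all symmetry_mask generators.
Proof. by vm_compute. Qed.

Lemma symmetry_maskP g : symmetry_mask g ->
  [/\ {in subspace_masks, forall s, g s \in subspace_masks},
      {in subspace_masks, involutive g} &
      {in subspace_masks &, forall s t, dS_mask (g s) (g t) = dS_mask s t}].
Proof.
case/andP=> /allP g_invol /allP g_dS.
have graphP s : s \in subspace_masks -> (s, g s) \in [seq (s, g s) | s <- subspace_masks].
  exact: map_f.
split=> [s /graphP /g_invol /andP [] // | s /graphP /g_invol /andP [_ /eqP] //|].
by move=> s t /graphP /g_dS /allP g_dS_s /graphP /g_dS_s /eqP.
Qed.

Definition subsp_map (g : seq bool -> seq bool) (X : subsp) : subsp := subsp_of (g (mask_of X)).

Section SymmetryMask.
Variable g : seq bool -> seq bool.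
Hypothesis g_sym : symmetry_mask g.

Let mask_in X : mask_of X \in subspace_masks.
Proof. by rewrite mem_subspace_masks mask_of_closed. Qed.

Let g_closed X : closed_mask (g (mask_of X)).
Proof. by have [g_in _ _] := symmetry_maskP g_sym; rewrite -mem_subspace_masks g_in. Qed.

Lemma subsp_map_invol : involutive (subsp_map g).
Proof.
have [_ gK _] := symmetry_maskP g_sym => X.
by rewrite /subsp_map (mask_of_subsp (g_closed X)) (gK _ (mask_in X)) subsp_of_mask.
Qed.

Lemma dS_subsp_map X Y : dS (subsp_map g X) (subsp_map g Y) = dS X Y.
Proof.
have [_ _ g_dS] := symmetry_maskP g_sym.
rewrite -dS_mask_of (mask_of_subsp (g_closed X)) (mask_of_subsp (g_closed Y)).
by rewrite (g_dS _ _ (mask_in X) (mask_in Y)) dS_mask_of.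
Qed.

End SymmetryMask.

Definition index_table (g : seq bool -> seq bool) : seq nat :=
  [seq index (g s) subspace_masks | s <- subspace_masks].

Definition act_indices (t : seq nat) (K : seq nat) : seq nat := sort leq (map (nth 0 t) K).

Lemma act_index_table g K : symmetry_mask g -> all (gtn 67) K ->
  all (gtn 67) (act_indices (index_table g) K) /\
  map subsp_at (act_indices (index_table g) K) =i map (subsp_map g) (map subsp_at K).
Proof.
move=> g_sym /allP K67; have [g_in _ _] := symmetry_maskP g_sym.
have mask_in k : k < 67 -> mask_at k \in subspace_masks by move=> k67; apply: mem_nth.
have tableE k : k < 67 -> nth 0 (index_table g) k = index (g (mask_at k)) subspace_masks.
  by move=> k67; rewrite (nth_map [::]).
split.
  rewrite all_sort; apply/allP => _ /mapP [k /K67 k67 ->].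
  by rewrite /= tableE // -size_subspace_masks index_mem g_in ?mask_in.
move=> X; rewrite (perm_mem (perm_map _ (permEl (perm_sort _ _)))) -!map_comp.
congr (X \in _); apply/eq_in_map => k /K67 k67 /=.
by rewrite tableE // /subsp_at /mask_at nth_index ?g_in ?mask_in // /subsp_map mask_of_subsp_at.
Qed.

Fixpoint lex_leq (s t : seq nat) : bool :=
  match s, t with
  | [::], _ => true
  | _ :: _, [::] => false
  | x :: s', y :: t' => if x < y then true else if x == y then lex_leq s' t' else false
  end.

Fixpoint undup_sorted (s : seq (seq nat)) : seq (seq nat) :=
  if s is x :: s' then
    if s' is y :: _ then (if x == y then undup_sorted s' else x :: undup_sorted s') else s
  else s.

Fixpoint drop_lex_lt (x : seq nat) (o : seq (seq nat)) : seq (seq nat) :=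
  if o is y :: o' then (if lex_leq x y then o else drop_lex_lt x o') else o.

(* The items of [s] that are not in [o]; both lists are sorted by [lex_leq]. *)
Fixpoint sorted_diff (s o : seq (seq nat)) : seq (seq nat) :=
  if s is x :: s' then
    let o' := drop_lex_lt x o in
    if head [::] o' == x then sorted_diff s' o' else x :: sorted_diff s' o'
  else [::].

Lemma mem_undup_sorted s : {subset undup_sorted s <= s}.
Proof.
elim: s => [|x [|y s] IHs] //= K.
have in_tail : K \in y :: s -> K \in [:: x, y & s] by move=> Ks; rewrite in_cons Ks orbT.
case: eqP => _ => [/IHs/in_tail // |].
by rewrite in_cons => /predU1P [-> | /IHs/in_tail //]; rewrite mem_head.
Qed.

Lemma mem_sorted_diff s o : {subset sorted_diff s o <= s}.
Proof.
elim: s o => [|x s IHs] o K //=.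
have in_tail : K \in s -> K \in x :: s by move=> Ks; rewrite in_cons Ks orbT.
case: eqP => _ => [/IHs/in_tail // |].
by rewrite in_cons => /predU1P [-> | /IHs/in_tail //]; rewrite mem_head.
Qed.

Definition index_orbit_step (T : seq (seq nat)) (seen_new : seq (seq nat) * seq (seq nat)) :=
  let: (seen, new) := seen_new in
  let next := sorted_diff (undup_sorted (sort lex_leq [seq act_indices t K | t <- T, K <- new])) seen in
  (merge lex_leq seen next, next).

(* Eight rounds of breadth-first search suffice to exhaust the orbits used below;
   [five_cliques_orbits] checks this rather than assuming it. *)
Definition index_orbit (T : seq (seq nat)) (K0 : seq nat) : seq (seq nat) :=
  (iter 8 (index_orbit_step T) ([:: K0], [:: K0])).1.

Lemma index_orbit_ind (P : seq nat -> Prop) T K0 :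
  P K0 -> (forall t K, t \in T -> P K -> P (act_indices t K)) -> {in index_orbit T K0, forall K, P K}.
Proof.
move=> PK0 P_act; rewrite /index_orbit.
suff: forall n, let: (seen, new) := iter n (index_orbit_step T) ([:: K0], [:: K0]) in
  {in seen, forall K, P K} /\ {in new, forall K, P K} by move/(_ 8); case: (iter _ _ _) => ? ? [].
elim=> [|n]; first by split=> K; rewrite inE => /eqP ->.
rewrite iterS; case: (iter _ _ _) => seen new [P_seen P_new] /=.
have P_next : {in sorted_diff (undup_sorted (sort lex_leq [seq act_indices t K | t <- T, K <- new])) seen,
               forall K, P K}.
  move=> K /mem_sorted_diff /mem_undup_sorted; rewrite mem_sort.
  by case/allpairsP => -[t K'] /= [tT /P_new PK' ->]; apply: P_act.
by split=> // K; rewrite mem_merge mem_cat => /orP [/P_seen | /P_next].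
Qed.

(** * Classification *)

(* Positions in [subspace_masks]: a line spread 10, 17, 23, 26, 62; the point 29
   on the line 62; the point 2 on the line 26; the plane 64 through the line 62,
   missing the point 2. *)
Definition code_a_indices : seq nat := [:: 10; 17; 23; 26; 62].
Definition code_b_indices : seq nat := [:: 10; 17; 23; 26; 29].
Definition code_c_indices : seq nat := [:: 2; 10; 17; 23; 64].

Definition symmetry_tables : seq (seq nat) := map index_table generators.

Lemma five_cliques_orbits :
  cliques far_table 5 =
  sort lex_leq (index_orbit symmetry_tables code_a_indices ++
                index_orbit symmetry_tables code_b_indices ++
                index_orbit symmetry_tables code_c_indices).
Proof. by apply/eqP; vm_compute. Qed.

Lemma mem_map_all (T : Type) (U : eqType) (f : T -> U) (p : pred T) s y :
  all p s -> y \in map f s -> exists2 x, p x & y = f x.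
Proof.
elim: s => //= x s IHs /andP [px ps]; rewrite in_cons => /predU1P [-> | /IHs]; last exact.
by exists x.
Qed.

Lemma orbit_code_iso K0 K : K \in index_orbit symmetry_tables K0 -> all (gtn 67) K0 ->
  code_iso (map subsp_at K) (map subsp_at K0).
Proof.
move=> orbitK K0_67.
suff [] : all (gtn 67) K /\ code_iso (map subsp_at K) (map subsp_at K0) by [].
move: K orbitK; apply: index_orbit_ind; first by split=> //; apply: code_iso_refl.
move=> t K /(mem_map_all generators_symmetries) [g g_sym ->] [K67 isoK].
have [actK67 actKE] := act_index_table g_sym K67; split=> //.
apply: code_iso_eq_mem actKE _; apply: code_iso_trans isoK.
exact/code_iso_map/dS_subsp_map/g_sym/subsp_map_invol.
Qed.

Lemma mem_sort_cat3 (T : eqType) (r : rel T) x s1 s2 s3 :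
  x \in sort r (s1 ++ s2 ++ s3) -> [\/ x \in s1, x \in s2 | x \in s3].
Proof. by rewrite mem_sort !mem_cat => /or3P. Qed.

Lemma code5_classes C : is_code 3 C -> size C = 5 ->
  [\/ code_iso C (map subsp_at code_a_indices), code_iso C (map subsp_at code_b_indices)
    | code_iso C (map subsp_at code_c_indices)].
Proof.
move=> codeC C5; have := index_code_clique codeC; rewrite C5 five_cliques_orbits.
move=> /mem_sort_cat3 [] /orbit_code_iso iso;
  [apply: Or31 | apply: Or32 | apply: Or33]; apply: code_iso_eq_mem (iso isT) => X;
  by rewrite index_codeK.
Qed.

Lemma subv_dim_cap (U V : subsp) : (U <= V)%VS = (\dim (U :&: V) == \dim U).
Proof.
apply/capv_idPl/eqP => [-> // | dimUV].
by apply/eqP; rewrite eqEdim capvSl dimUV leqnn.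
Qed.

Definition spread_line (i : 'I_5) : subsp := subsp_at (nth 0 code_a_indices i).
Definition point5 : subsp := subsp_at 29.
Definition point4 : subsp := subsp_at 2.
Definition plane5 : subsp := subsp_at 64.

Lemma line_spread_example : line_spread spread_line.
Proof.
have line67 (i : 'I_5) : nth 0 code_a_indices i < 67.
  by apply: (allP (_ : all (gtn 67) code_a_indices)) => //; apply: mem_nth.
have /all_iotaP dim_lines :
  all (fun i => dim_mask (mask_at (nth 0 code_a_indices i)) == 2) (iota 0 5).
  by vm_compute.
have /all_iotaP cap_lines : all (fun i => all (fun j => (i == j) ||
  (dim_mask (cap_mask (mask_at (nth 0 code_a_indices i)) (mask_at (nth 0 code_a_indices j))) == 0))
  (iota 0 5)) (iota 0 5).
  by vm_compute.
split=> [i | i j ij]; first by rewrite (dim_subsp_at (line67 i)) (eqP (dim_lines i (ltn_ord i))).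
apply/eqP; rewrite -dimv_eq0 (dim_cap_subsp_at (line67 i) (line67 j)).
have /all_iotaP /(_ j (ltn_ord j)) := cap_lines i (ltn_ord i).
by move: ij; rewrite -(inj_eq val_inj) => /negbTE ->.
Qed.

Lemma spread_data_example : spread_data spread_line point5 point4 plane5.
Proof.
split; first exact: line_spread_example.
all: rewrite /point5 /point4 /plane5 /spread_line /=.
all: by split; [rewrite dim_subsp_at | rewrite subv_dim_cap dim_cap_subsp_at ?dim_subsp_at..];
  vm_compute.
Qed.

Lemma code_c_example :
  map subsp_at code_c_indices =i code_c spread_line point4 plane5.
Proof.
have -> : code_c spread_line point4 plane5 = map subsp_at [:: 10; 17; 23; 2; 64] by [].
by apply/perm_mem/perm_map.
Qed.

Definition spread_rep (n : nat) : seq subsp :=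
  if n == 20 then code_a spread_line
  else if n == 12 then code_b spread_line point5
  else code_c spread_line point4 plane5.

Lemma code5_iso_spread_rep C :
  is_code 3 C -> size C = 5 -> code_iso C (spread_rep (dist4_pairs C)).
Proof.
move=> codeC C5; have [codeA codeB codeC'] := spread_codes spread_data_example.
have [dA dB dC] := spread_dist4_pairs spread_data_example.
have dist4E D : code_iso C D -> is_code 3 D -> dist4_pairs C = dist4_pairs D.
  by move=> isoCD [uD _]; apply: dist4_pairs_iso isoCD (proj1 codeC) uD.
case: (code5_classes codeC C5) => [isoA | isoB | isoC].
- by rewrite (dist4E _ isoA codeA) dA.
- by rewrite (dist4E _ isoB codeB) dB.
have {}isoC : code_iso C (code_c spread_line point4 plane5).
  exact: code_iso_trans isoC (code_iso_eq_mem code_c_example (code_iso_refl _)).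
by rewrite (dist4E _ isoC codeC') dC.
Qed.

Theorem mainTheorem18 :
  ((forall C : seq subsp, is_code 3 C -> (size C <= 5)%N) /\
   (exists C : seq subsp, is_code 3 C /\ size C = 5%N)) /\
  (exists (L : 'I_5 -> subsp) (P5 P4 E : subsp), spread_data L P5 P4 E) /\
  (forall (L : 'I_5 -> subsp) (P5 P4 E : subsp), spread_data L P5 P4 E ->
     let Ca := code_a L in let Cb := code_b L P5 in let Cc := code_c L P4 E in
     [/\ is_code 3 Ca /\ size Ca = 5%N,
         is_code 3 Cb /\ size Cb = 5%N,
         is_code 3 Cc /\ size Cc = 5%N,
         [/\ ~ code_iso Ca Cb, ~ code_iso Ca Cc & ~ code_iso Cb Cc] &
         forall C : seq subsp, is_code 3 C -> size C = 5%N ->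
           code_iso C Ca \/ code_iso C Cb \/ code_iso C Cc]).
Proof.
split; first split; [exact: code3_size_le5 | | ].
  by exists (code_a spread_line); have [] := spread_codes spread_data_example.
split; first by exists spread_line, point5, point4, plane5; apply: spread_data_example.
move=> L P5 P4 E data /=; have [codeA codeB codeC] := spread_codes data.
have [dA dB dC] := spread_dist4_pairs data.
have noniso C D : is_code 3 C -> is_code 3 D -> dist4_pairs C != dist4_pairs D -> ~ code_iso C D.
  by move=> [uC _] [uD _] /eqP neqCD /dist4_pairs_iso /(_ uC uD).
have isoA := code5_iso_spread_rep codeA erefl; rewrite dA /= in isoA.
have isoB := code5_iso_spread_rep codeB erefl; rewrite dB /= in isoB.
have isoC := code5_iso_spread_rep codeC erefl; rewrite dC /= in isoC.
split=> //.
- by split; [apply: noniso codeA codeB _ | apply: noniso codeA codeC _ | apply: noniso codeB codeC _];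
    rewrite ?dA ?dB ?dC.
move=> C codeC5 C5; have := code5_iso_spread_rep codeC5 C5; rewrite /spread_rep.
case: eqP => _ isoCR; first by left; apply: code_iso_trans isoCR (code_iso_sym isoA).
case: eqP isoCR => _ isoCR; first by right; left; apply: code_iso_trans isoCR (code_iso_sym isoB).
by right; right; apply: code_iso_trans isoCR (code_iso_sym isoC).
Qed.
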